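(* For all $\lambda$-terms $A,B$: (1) If $A\to_{\beta''}B$ then $A\twoheadrightarrow_{\beta'}B$. (2) If $A\to_{\beta'}B$ then $A\twoheadrightarrow_{\beta''}B$.
   Context: Let $\mathcal V$ be an infinite set of variables enumerated in a fixed order $x,y,z,x',y',z',\dots$. $\lambda$-terms: $\mathcal M ::= \mathcal V \mid (\lambda\mathcal V.\mathcal M)\mid(\mathcal M\mathcal M)$; $=_{\mathcal M}$ is syntactic identity. $FV(C)$ is the set of variables with a free occurrence in $C$; $BV(C)$ the set of $v$ with $\lambda v$ occurring in $C$; $FV(vA)=\{v\}\cup FV(A)$, $FV(AB)=FV(A)\cup FV(B)$. A term $C$ is clean iff $BV(C)\cap FV(C)=\emptyset$ and each $\lambda v$ occurs at most once in $C$. Grafting $A\{v:=B\}$: $v\{v:=B\}=B$; $v'\{v:=B\}=v'$ if $v'\neq v$; $(AC)\{v:=B\}=A\{v:=B\}C\{v:=B\}$; $(\lambda v.A)\{v:=B\}=\lambda v.A$; $(\lambda v'.A)\{v:=B\}=\lambda v'.A\{v:=B\}$ if $v\neq v'$. Replacement $A\langle\langle v:=B\rangle\rangle$: $v\langle\langle v:=B\rangle\rangle=B$; $v'\langle\langle v:=B\rangle\rangle=v'$ if $v\neq v'$; $(AC)\langle\langle v:=B\rangle\rangle=A\langle\langle v:=B\rangle\rangle C\langle\langle v:=B\rangle\rangle$; $(\lambda v.A)\langle\langle v:=B\rangle\rangle=\lambda v.A$; $(\lambda v'.A)\langle\langle v:=B\rangle\rangle=\lambda v'.A\langle\langle v:=B\rangle\rangle$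 if $v\neq v'$ and ($v'\notin FV(B)$ or $v\notin FV(A)$); $(\lambda v'.A)\langle\langle v:=B\rangle\rangle=\lambda v''.A\langle\langle v':=v''\rangle\rangle\langle\langle v:=B\rangle\rangle$ if $v\neq v'$, $v'\in FV(B)$, $v\in FV(A)$, with $v''$ the first variable in the ordered list such that $v''\notin FV(AB)$. A relation is compatible if $A\,R\,B$ implies $(AC)R(BC)$, $(CA)R(CB)$, $(\lambda u.A)R(\lambda u.B)$. $\to_\alpha$: least compatible relation with $\lambda v.A\to_\alpha\lambda v'.A\langle\langle v:=v'\rangle\rangle$ for $v'\notin FV(A)$. $\to_{\alpha'}$: least compatible relation with $\lambda v.A\to_{\alpha'}\lambda v'.A\{v:=v'\}$ for $v'\notin FV(vA)$, $v,v'\notin BV(A)$; $\twoheadrightarrow_{\alpha'}$ its reflexive transitive closure. $\to_{\beta'}$: least compatible relation with $(\lambda v.A)B\to_{\beta'}A\langle\langle v:=B\rangle\rangle$; $\twoheadrightarrow_{\beta'}$ is the reflexive transitive closure of $\to_{\beta'}\cup\to_\alpha$. $\to_{\beta''}$: least compatible relation with $(\lambda v.A)B\to_{\beta''}A'\{v':=B'\}$ whenever $(\lambda v.A)B\twoheadrightarrow_{\alpha'}(\lambda v'.A')B'$ and $(\lambda v'.A')B'$ is clean; $\twoheadrightarrow_{\beta''}$ is the reflexive transitive closure of $\to_{\beta''}\cup\to_{\alpha'}$. *)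

From Stdlib Require Import List Arith Bool Relations.
Import ListNotations.

Definition var := nat.

Inductive term : Type :=
| Var : var -> term
| Lam : var -> term -> term
| App : term -> term -> term.

Fixpoint FV (t : term) : list var :=
  match t with
  | Var x => [x]
  | Lam x A => filter (fun y => negb (Nat.eqb y x)) (FV A)
  | App A B => FV A ++ FV B
  end.

(* binder occurrences, with multiplicity: BV(C) is the set of its elements *)
Fixpoint binders (t : term) : list var :=
  match t with
  | Var _ => []
  | Lam x A => x :: binders A
  | App A B => binders A ++ binders B
  end.

Definition BV (t : term) : list var := binders t.

Definition memb (x : var) (l : list var) : bool := existsb (Nat.eqb x) l.

Definition clean (C : term) : Prop :=
  (forall v, In v (BV C) -> ~ In v (FV C)) /\ NoDup (binders C).

Fixpoint search (k n : nat) (l : list var) : var :=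
  match k with
  | 0 => n
  | S k => if memb n l then search k (S n) l else n
  end.
Definition fresh (l : list var) : var := search (S (length l)) 0 l.

Fixpoint graft (A : term) (v : var) (B : term) : term :=
  match A with
  | Var x => if Nat.eqb x v then B else Var x
  | App A1 A2 => App (graft A1 v B) (graft A2 v B)
  | Lam x A1 => if Nat.eqb x v then Lam x A1 else Lam x (graft A1 v B)
  end.

Fixpoint size (t : term) : nat :=
  match t with
  | Var _ => 1
  | Lam _ A => S (size A)
  | App A B => S (size A + size B)
  end.

(* replacement A<<v:=B>>, by recursion on a fuel bounded below by size A
   (renaming a bound variable does not change the size, so fuel = size A
   always suffices) *)
Fixpoint repf (n : nat) (A : term) (v : var) (B : term) : term :=
  match n with
  | 0 => A
  | S n =>
    match A with
    | Var x => if Nat.eqb x v then B else Var x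
    | App A1 A2 => App (repf n A1 v B) (repf n A2 v B)
    | Lam x A1 =>
      if Nat.eqb v x then Lam x A1
      else if memb x (FV B) && memb v (FV A1) then
        let x' := fresh (FV (App A1 B)) in
        Lam x' (repf n (repf n A1 x (Var x')) v B)
      else Lam x (repf n A1 v B)
    end
  end.

Definition rep (A : term) (v : var) (B : term) : term := repf (size A) A v B.

Inductive compat (R : term -> term -> Prop) : term -> term -> Prop :=
| c_base : forall A B, R A B -> compat R A B
| c_appl : forall A B C, compat R A B -> compat R (App A C) (App B C)
| c_appr : forall A B C, compat R A B -> compat R (App C A) (App C B)
| c_lam  : forall u A B, compat R A B -> compat R (Lam u A) (Lam u B).

Inductive alpha_base : term -> term -> Prop :=
| ab : forall v v' A, ~ In v' (FV A) ->
    alpha_base (Lam v A) (Lam v' (rep A v (Var v'))).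
Definition alpha := compat alpha_base.

(* FV(vA) = {v} ∪ FV(A) *)
Inductive alpha'_base : term -> term -> Prop :=
| a'b : forall v v' A, ~ In v' (v :: FV A) ->
    ~ In v (BV A) -> ~ In v' (BV A) ->
    alpha'_base (Lam v A) (Lam v' (graft A v (Var v'))).
Definition alpha' := compat alpha'_base.
Definition alpha'_star := clos_refl_trans term alpha'.

Inductive beta'_base : term -> term -> Prop :=
| b'b : forall v A B, beta'_base (App (Lam v A) B) (rep A v B).
Definition beta' := compat beta'_base.
Definition beta'_star := clos_refl_trans term (union term beta' alpha).

Inductive beta''_base : term -> term -> Prop :=
| b''b : forall v A B v' A' B',
    alpha'_star (App (Lam v A) B) (App (Lam v' A') B') ->
    clean (App (Lam v' A') B') ->
    beta''_base (App (Lam v A) B) (graft A' v' B').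
Definition beta'' := compat beta''_base.
Definition beta''_star := clos_refl_trans term (union term beta'' alpha').

(** Interpret a named term, given an environment for its free variables, as a
    locally nameless term with de Bruijn indices for bound occurrences. Both
    replacement and capture-free grafting become substitution in the
    environment, and α'-steps do not change the interpretation. Conversely, terms
    with the same interpretation are α'-convertible: rename the binders of two
    abstractions to a common fresh variable, after freshening the inner binders
    so that the renaming graft is legal. Hence a β''-step is an α'-path followed
    by a β'-step whose replacement is a graft, and a β'-step is matched by
    α'-converting the redex to a clean one, grafting, and α'-converting the
    result to the replacement. *)

From Stdlib Require Import List Arith Bool Relations Lia.
Import ListNotations.

Lemma memb_true_iff x l : memb x l = true <-> In x l.
Proof.
  unfold memb. rewrite existsb_exists. split.
  - intros [y [Hy E]]. apply Nat.eqb_eq in E. subst. exact Hy.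
  - intros H. exists x. split; [exact H | apply Nat.eqb_refl].
Qed.

Lemma memb_false_iff x l : memb x l = false <-> ~ In x l.
Proof. rewrite <- memb_true_iff. destruct (memb x l); intuition congruence. Qed.

Lemma search_notin k : forall n l,
  (forall m, n <= m < n + k -> In m l) \/ ~ In (search k n l) l.
Proof.
  induction k as [|k IH]; intros n l; simpl.
  - left. intros. lia.
  - destruct (memb n l) eqn:E.
    + apply memb_true_iff in E.
      destruct (IH (S n) l) as [Hall|Hnot]; [left|right; exact Hnot].
      intros m Hm. destruct (Nat.eq_dec m n) as [->|Hne]; [exact E|apply Hall; lia].
    + right. apply memb_false_iff, E.
Qed.

Lemma fresh_notin l : ~ In (fresh l) l.
Proof.
  unfold fresh. destruct (search_notin (S (length l)) 0 l) as [Hall|Hnot]; [|exact Hnot].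
  exfalso. assert (Hincl : incl (seq 0 (S (length l))) l).
  { intros m Hm. apply in_seq in Hm. apply Hall. lia. }
  apply NoDup_incl_length in Hincl; [|apply seq_NoDup].
  rewrite length_seq in Hincl. exact (Nat.nle_succ_diag_l _ Hincl).
Qed.

Lemma In_FV_Lam y x A : In y (FV (Lam x A)) <-> In y (FV A) /\ y <> x.
Proof. simpl. rewrite filter_In, negb_true_iff, Nat.eqb_neq. tauto. Qed.

Ltac case_eqb :=
  repeat match goal with |- context [Nat.eqb ?a ?b] => destruct (Nat.eqb_spec a b) end.

Lemma binders_graft_var A v w : binders (graft A v (Var w)) = binders A.
Proof.
  induction A as [x|x A IH|A1 IH1 A2 IH2]; simpl; case_eqb; simpl; try congruence.
Qed.

Lemma graft_notin_FV A v B : ~ In v (FV A) -> graft A v B = A.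
Proof.
  induction A as [x|x A IH|A1 IH1 A2 IH2]; intros Hv; simpl; case_eqb; subst.
  - exfalso. apply Hv. left. reflexivity.
  - reflexivity.
  - reflexivity.
  - rewrite IH; [reflexivity|]. intro E. apply Hv, In_FV_Lam. auto.
  - simpl in Hv. rewrite in_app_iff in Hv. rewrite IH1, IH2; tauto.
Qed.

Lemma graft_var_inv A v v' : ~ In v' (FV A) -> ~ In v' (binders A) -> v <> v' ->
  graft (graft A v (Var v')) v' (Var v) = A.
Proof.
  induction A as [x|x A IH|A1 IH1 A2 IH2]; intros Hfv Hbv Hne; simpl.
  - case_eqb; simpl; case_eqb; subst; try congruence.
    exfalso. apply Hfv. left. reflexivity.
  - case_eqb; simpl; case_eqb; subst; try congruence.
    + rewrite graft_notin_FV; [reflexivity|]. intro E. apply Hfv, In_FV_Lam. auto.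
    + exfalso. apply Hbv. left. reflexivity.
    + rewrite IH; [reflexivity| |intro; apply Hbv; right; assumption|exact Hne].
      intro E. apply Hfv, In_FV_Lam. split; [exact E|]. intros ->. apply Hbv. left. reflexivity.
  - simpl in Hfv, Hbv. rewrite in_app_iff in Hfv, Hbv.
    rewrite IH1, IH2; tauto.
Qed.

Lemma In_FV_graft_var A v w y : ~ In w (binders A) ->
  In y (FV (graft A v (Var w))) <-> (In y (FV A) /\ y <> v) \/ (y = w /\ In v (FV A)).
Proof.
  induction A as [x|x A IH|A1 IH1 A2 IH2]; intros Hw; cbn [graft].
  - case_eqb; simpl; subst; intuition; subst; intuition congruence.
  - assert (w <> x) by (intros ->; apply Hw; left; reflexivity).
    case_eqb; subst; rewrite !In_FV_Lam; [|rewrite IH by (intro; apply Hw; right; assumption)];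
      intuition; subst; intuition congruence.
  - simpl. rewrite !in_app_iff, IH1, IH2 by (intro; apply Hw; apply in_or_app; auto).
    intuition.
Qed.

Inductive lnterm : Type :=
| LFree : var -> lnterm
| LBound : nat -> lnterm
| LLam : lnterm -> lnterm
| LApp : lnterm -> lnterm -> lnterm.

Fixpoint lift (c : nat) (t : lnterm) : lnterm :=
  match t with
  | LFree x => LFree x
  | LBound i => if i <? c then LBound i else LBound (S i)
  | LLam t => LLam (lift (S c) t)
  | LApp t u => LApp (lift c t) (lift c u)
  end.

Lemma lift_lift t : forall k c, k <= c -> lift k (lift c t) = lift (S c) (lift k t).
Proof.
  induction t as [x|i|t IH|t IHt u IHu]; intros k c Hk; simpl.
  - reflexivity.
  - repeat (match goal with |- context [?a <? ?b] => destruct (Nat.ltb_spec a b) end; simpl);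
      solve [reflexivity | lia].
  - rewrite IH by lia. reflexivity.
  - rewrite IHt, IHu by lia. reflexivity.
Qed.

Definition env := var -> lnterm.

Definition env_upd (r : env) (v : var) (s : lnterm) : env :=
  fun y => if y =? v then s else r y.

Definition env_bind (r : env) (x : var) : env :=
  fun y => if y =? x then LBound 0 else lift 0 (r y).

Fixpoint nameless (r : env) (t : term) : lnterm :=
  match t with
  | Var x => r x
  | Lam x A => LLam (nameless (env_bind r x) A)
  | App A B => LApp (nameless r A) (nameless r B)
  end.

Lemma nameless_eq_FV A : forall r r', (forall y, In y (FV A) -> r y = r' y) ->
  nameless r A = nameless r' A.
Proof.
  induction A as [x|x A IH|A1 IH1 A2 IH2]; intros r r' H; simpl.
  - apply H. left. reflexivity.
  - f_equal. apply IH. intros y Hy. unfold env_bind. case_eqb; [reflexivity|].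
    f_equal. apply H, In_FV_Lam. auto.
  - f_equal; [apply IH1|apply IH2]; intros y Hy; apply H, in_or_app; auto.
Qed.

Lemma nameless_lift B : forall r r' c, (forall y, In y (FV B) -> r' y = lift c (r y)) ->
  nameless r' B = lift c (nameless r B).
Proof.
  induction B as [x|x B IH|B1 IH1 B2 IH2]; intros r r' c H; simpl.
  - apply H. left. reflexivity.
  - f_equal. apply IH. intros z Hz. unfold env_bind. case_eqb; [reflexivity|].
    rewrite H by (apply In_FV_Lam; auto). apply lift_lift. lia.
  - f_equal; [apply IH1|apply IH2]; intros y Hy; apply H, in_or_app; auto.
Qed.

Lemma nameless_bind_notin_FV r x B : ~ In x (FV B) ->
  nameless (env_bind r x) B = lift 0 (nameless r B).
Proof.
  intro Hx. apply nameless_lift. intros y Hy. unfold env_bind.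
  case_eqb; subst; [contradiction|reflexivity].
Qed.

Lemma size_repf_var n : forall A v w, size (repf n A v (Var w)) = size A.
Proof.
  induction n as [|n IH]; [reflexivity|]. intros [x|x A|A1 A2] v w; simpl.
  - case_eqb; reflexivity.
  - destruct (v =? x); [reflexivity|]. destruct (_ && _); simpl; rewrite ?IH; reflexivity.
  - rewrite !IH. reflexivity.
Qed.

Lemma nameless_repf n : forall A v B r, size A <= n ->
  nameless r (repf n A v B) = nameless (env_upd r v (nameless r B)) A.
Proof.
  induction n as [|n IH]; intros A v B r Hsize.
  { destruct A; simpl in Hsize; lia. }
  destruct A as [x|x A|A1 A2]; simpl in Hsize |- *.
  - unfold env_upd. case_eqb; reflexivity.
  - case_eqb.
    + subst. simpl. f_equal. apply nameless_eq_FV. intros y _.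
      unfold env_bind, env_upd. case_eqb; reflexivity.
    + destruct (memb x (FV B) && memb v (FV A)) eqn:Hcapture; simpl; f_equal.
      * apply andb_true_iff in Hcapture. rewrite !memb_true_iff in Hcapture.
        pose proof (fresh_notin (FV (App A B))) as Hx'.
        set (x' := fresh (FV (App A B))) in *. simpl in Hx'. rewrite in_app_iff in Hx'.
        rewrite IH by (rewrite size_repf_var; lia).
        rewrite IH by lia.
        rewrite nameless_bind_notin_FV by tauto.
        apply nameless_eq_FV. intros y Hy. simpl. unfold env_upd, env_bind.
        case_eqb; subst; tauto || congruence.
      * rewrite IH by lia.
        apply nameless_eq_FV. intros y Hy. unfold env_upd, env_bind.
        case_eqb; subst; try congruence.
        apply nameless_bind_notin_FV. rewrite <- memb_true_iff. intro HB.
        rewrite HB, (proj2 (memb_true_iff _ _) Hy) in Hcapture. discriminate.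
  - f_equal; apply IH; lia.
Qed.

Lemma nameless_graft A : forall v B r, (forall y, In y (binders A) -> ~ In y (FV B)) ->
  nameless r (graft A v B) = nameless (env_upd r v (nameless r B)) A.
Proof.
  induction A as [x|x A IH|A1 IH1 A2 IH2]; intros v B r Hcapt; simpl.
  - unfold env_upd. case_eqb; reflexivity.
  - case_eqb; subst; simpl; f_equal.
    + apply nameless_eq_FV. intros y _. unfold env_bind, env_upd. case_eqb; reflexivity.
    + rewrite IH by (intros y Hy; apply Hcapt; right; exact Hy).
      rewrite nameless_bind_notin_FV by (apply Hcapt; left; reflexivity).
      apply nameless_eq_FV. intros y Hy. unfold env_upd, env_bind. case_eqb; congruence.
  - f_equal; [apply IH1|apply IH2]; intros y Hy; apply Hcapt, in_or_app; auto.
Qed.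

Lemma repf_graft n : forall A v B, size A <= n ->
  (forall y, In y (binders A) -> ~ In y (FV B)) -> repf n A v B = graft A v B.
Proof.
  induction n as [|n IH]; intros [x|x A|A1 A2] v B Hsize Hcapt; simpl in Hsize |- *;
    try lia; try reflexivity.
  - case_eqb; subst; try congruence.
    rewrite (proj2 (memb_false_iff x (FV B))) by (apply Hcapt; left; reflexivity).
    simpl. rewrite IH; [reflexivity|lia|]. intros y Hy. apply Hcapt. right. exact Hy.
  - rewrite !IH; try reflexivity; try lia; intros y Hy; apply Hcapt, in_or_app; auto.
Qed.

Lemma rep_graft A v B : (forall y, In y (binders A) -> ~ In y (FV B)) ->
  rep A v B = graft A v B.
Proof. apply repf_graft. reflexivity. Qed.

Definition compatible (S : relation term) : Prop :=
  (forall A B C, S A B -> S (App A C) (App B C)) /\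
  (forall A B C, S A B -> S (App C A) (App C B)) /\
  (forall u A B, S A B -> S (Lam u A) (Lam u B)).

Lemma compat_least R S : compatible S -> inclusion term R S -> inclusion term (compat R) S.
Proof.
  intros (Happl & Happr & Hlam) HRS A B H.
  induction H; [apply HRS|apply Happl|apply Happr|apply Hlam]; assumption.
Qed.

Lemma compatible_compat R : compatible (compat R).
Proof. repeat split; intros; constructor; assumption. Qed.

Lemma compatible_union S1 S2 : compatible S1 -> compatible S2 -> compatible (union term S1 S2).
Proof. unfold union. intros (? & ? & ?) (? & ? & ?). repeat split; intros; intuition. Qed.

Lemma compatible_clos_rt S : compatible S -> compatible (clos_refl_trans term S).
Proof.
  intros (Happl & Happr & Hlam).
  repeat split; intros; induction H; eauto using rt_step, rt_refl, rt_trans.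
Qed.

Lemma clos_rt_mono R S : inclusion term R S ->
  inclusion term (clos_refl_trans term R) (clos_refl_trans term S).
Proof. intros HRS A B H. induction H; eauto using rt_step, rt_refl, rt_trans. Qed.

Lemma compatible_alpha'_star : compatible alpha'_star.
Proof. apply compatible_clos_rt, compatible_compat. Qed.

Lemma alpha'_star_appl A B C : alpha'_star A B -> alpha'_star (App A C) (App B C).
Proof. apply compatible_alpha'_star. Qed.

Lemma alpha'_star_appr A B C : alpha'_star A B -> alpha'_star (App C A) (App C B).
Proof. apply compatible_alpha'_star. Qed.

Lemma alpha'_star_lam u A B : alpha'_star A B -> alpha'_star (Lam u A) (Lam u B).
Proof. apply compatible_alpha'_star. Qed.

Lemma alpha'_base_sym T U : alpha'_base T U -> alpha'_base U T.
Proof.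
  intros [v v' A Hv' Hv Hv'b]. unfold BV in *.
  assert (Hne : v <> v') by (intros ->; apply Hv'; left; reflexivity).
  assert (Hfv : ~ In v' (FV A)) by (intro; apply Hv'; right; assumption).
  assert (Hback : alpha'_base (Lam v' (graft A v (Var v')))
                             (Lam v (graft (graft A v (Var v')) v' (Var v)))).
  { constructor; unfold BV; rewrite ?binders_graft_var; try assumption.
    intros [E|E]; [congruence|]. apply In_FV_graft_var in E; [|assumption]. intuition. }
  rewrite graft_var_inv in Hback by assumption. exact Hback.
Qed.

Lemma alpha'_sym T U : alpha' T U -> alpha' U T.
Proof.
  induction 1; [apply c_base, alpha'_base_sym|apply c_appl|apply c_appr|apply c_lam]; assumption.
Qed.

Lemma alpha'_star_sym T U : alpha'_star T U -> alpha'_star U T.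
Proof.
  induction 1; [apply rt_step, alpha'_sym; assumption|apply rt_refl|eapply rt_trans; eassumption].
Qed.

Definition nameless_equiv (T U : term) : Prop :=
  (forall r, nameless r T = nameless r U) /\ (forall y, In y (FV T) <-> In y (FV U)).

Lemma compatible_nameless_equiv : compatible nameless_equiv.
Proof.
  split; [|split]; intros * [Hn Hfv]; split; intros.
  1, 3, 5: simpl; rewrite Hn; reflexivity.
  1, 2: simpl; rewrite !in_app_iff, Hfv; reflexivity.
  rewrite !In_FV_Lam, Hfv. reflexivity.
Qed.

Lemma alpha'_base_nameless_equiv T U : alpha'_base T U -> nameless_equiv T U.
Proof.
  intros [v v' A Hv' Hv Hv'b]. unfold BV in *.
  assert (Hne : v <> v') by (intros ->; apply Hv'; left; reflexivity).
  assert (Hfv : ~ In v' (FV A)) by (intro; apply Hv'; right; assumption).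
  split.
  - intro r. simpl. f_equal.
    rewrite nameless_graft by (intros y Hy [E|[]]; subst; contradiction).
    apply nameless_eq_FV. intros y Hy. simpl. unfold env_upd, env_bind.
    case_eqb; subst; congruence.
  - intro y. rewrite !In_FV_Lam, In_FV_graft_var by assumption.
    intuition; subst; auto.
Qed.

Lemma alpha'_star_nameless_equiv T U : alpha'_star T U -> nameless_equiv T U.
Proof.
  induction 1 as [T U H|T|T U V _ [HTU1 HTU2] _ [HUV1 HUV2]].
  - revert T U H. apply compat_least;
      [apply compatible_nameless_equiv|exact alpha'_base_nameless_equiv].
  - split; reflexivity.
  - split; intros; [rewrite HTU1|rewrite HTU2]; auto.
Qed.

Lemma alpha'_star_fresh_binders T L : exists T', alpha'_star T T' /\
  NoDup (binders T') /\ forall y, In y (binders T') -> ~ In y L.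
Proof.
  revert L. induction T as [x|x A IH|A1 IH1 A2 IH2]; intros L.
  - exists (Var x). repeat split; [apply rt_refl|constructor|intros y []].
  - pose proof (fresh_notin (x :: FV A ++ L)) as Hw.
    set (w := fresh (x :: FV A ++ L)) in *. simpl in Hw. rewrite in_app_iff in Hw.
    destruct (IH (w :: x :: L)) as (A' & HA & Hnd & Havoid).
    assert (HwA' : ~ In w (FV A'))
      by (rewrite <- (proj2 (alpha'_star_nameless_equiv _ _ HA)); tauto).
    exists (Lam w (graft A' x (Var w))). simpl. rewrite binders_graft_var.
    repeat split.
    + eapply rt_trans; [apply alpha'_star_lam, HA|].
      apply rt_step, c_base. constructor; unfold BV.
      * intros [E|E]; tauto.
      * intro E. apply (Havoid x E). right. left. reflexivity.
      * intro E. apply (Havoid w E). left. reflexivity.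
    + constructor; [|exact Hnd]. intro E. apply (Havoid w E). left. reflexivity.
    + intros y [<-|Hy]; [tauto|]. intro E. apply (Havoid y Hy). right. right. exact E.
  - destruct (IH1 L) as (T1 & H1 & Hnd1 & Havoid1).
    destruct (IH2 (L ++ binders T1)) as (T2 & H2 & Hnd2 & Havoid2).
    exists (App T1 T2). simpl. repeat split.
    + eapply rt_trans; [apply alpha'_star_appl, H1|apply alpha'_star_appr, H2].
    + apply NoDup_app; [exact Hnd1|exact Hnd2|].
      intros y Hy1 Hy2. apply (Havoid2 y Hy2), in_or_app. right. exact Hy1.
    + intros y Hy. apply in_app_iff in Hy as [Hy|Hy]; [auto|].
      intro E. apply (Havoid2 y Hy), in_or_app. left. exact E.
Qed.

Lemma alpha'_star_rename_binder x A z : ~ In z (FV (Lam x A)) ->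
  exists A', alpha'_star (Lam x A) (Lam z A').
Proof.
  intro Hz. destruct (Nat.eq_dec z x) as [->|Hzx]; [exists A; apply rt_refl|].
  assert (HzA : ~ In z (FV A)) by (intro E; apply Hz, In_FV_Lam; auto).
  destruct (alpha'_star_fresh_binders A [x; z]) as (A' & HA & _ & Havoid).
  assert (HzA' : ~ In z (FV A'))
    by (rewrite <- (proj2 (alpha'_star_nameless_equiv _ _ HA)); exact HzA).
  exists (graft A' x (Var z)).
  eapply rt_trans; [apply alpha'_star_lam, HA|].
  apply rt_step, c_base. constructor; unfold BV.
  - intros [E|E]; [congruence|contradiction].
  - intro E. apply (Havoid x E). left. reflexivity.
  - intro E. apply (Havoid z E). right. left. reflexivity.
Qed.

Definition env_atomic (r : env) : Prop :=
  forall y, (exists z, r y = LFree z) \/ (exists i, r y = LBound i).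

Definition env_injective (r : env) : Prop := forall a b, r a = r b -> a = b.

Lemma env_atomic_bind r x : env_atomic r -> env_atomic (env_bind r x).
Proof.
  intros Hat y. unfold env_bind. case_eqb; [right; exists 0; reflexivity|].
  destruct (Hat y) as [[z ->]|[i ->]]; [left; exists z|right; exists (S i)]; reflexivity.
Qed.

Lemma env_injective_bind r x : env_atomic r -> env_injective r -> env_injective (env_bind r x).
Proof.
  intros Hat Hinj a b. unfold env_bind.
  destruct (Hat a) as [[za Ea]|[ia Ea]], (Hat b) as [[zb Eb]|[ib Eb]];
    rewrite Ea, Eb; simpl; case_eqb; intro E; subst; try discriminate; try reflexivity;
    apply Hinj; congruence.
Qed.

(* Induction on [d]: the renamed bodies are not subterms of [T] and [U], but
   their common interpretation is a subterm of [d]. *)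
Lemma alpha'_star_of_nameless d : forall r T U, env_atomic r -> env_injective r ->
  nameless r T = d -> nameless r U = d -> alpha'_star T U.
Proof.
  induction d as [z|i|d IH|d1 IH1 d2 IH2]; intros r T U Hat Hinj HT HU;
    destruct T as [x|x A|A1 A2], U as [y|y B|B1 B2]; simpl in HT, HU;
    try discriminate;
    try (destruct (Hat x) as [[? E]|[? E]]; congruence);
    try (destruct (Hat y) as [[? E]|[? E]]; congruence).
  1, 2: rewrite (Hinj x y) by congruence; apply rt_refl.
  - injection HT as HT. injection HU as HU.
    pose proof (fresh_notin (FV A ++ FV B)) as Hz. rewrite in_app_iff in Hz.
    set (z := fresh (FV A ++ FV B)) in *.
    destruct (alpha'_star_rename_binder x A z) as [A' HA]; [rewrite In_FV_Lam; tauto|].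
    destruct (alpha'_star_rename_binder y B z) as [B' HB]; [rewrite In_FV_Lam; tauto|].
    apply rt_trans with (Lam z A'); [exact HA|].
    apply rt_trans with (Lam z B'); [|apply alpha'_star_sym, HB].
    apply alpha'_star_lam, (IH (env_bind r z));
      [apply env_atomic_bind, Hat|apply env_injective_bind; assumption| |].
    + pose proof (proj1 (alpha'_star_nameless_equiv _ _ HA) r) as E.
      simpl in E. injection E as E. rewrite <- E. exact HT.
    + pose proof (proj1 (alpha'_star_nameless_equiv _ _ HB) r) as E.
      simpl in E. injection E as E. rewrite <- E. exact HU.
  - injection HT as HT1 HT2. injection HU as HU1 HU2.
    apply rt_trans with (App B1 A2).
    + apply alpha'_star_appl, (IH1 r); assumption.
    + apply alpha'_star_appr, (IH2 r); assumption.
Qed.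

Definition redex_equiv v A B w C D : Prop :=
  (forall r s, nameless (env_upd r v s) A = nameless (env_upd r w s) C) /\
  (forall r, nameless r B = nameless r D).

Lemma alpha'_redex w C D T : alpha' (App (Lam w C) D) T ->
  exists w' C' D', T = App (Lam w' C') D' /\ redex_equiv w C D w' C' D'.
Proof.
  intro H. inversion H as [? ? Hbase| ? ? ? Hfun| ? ? ? Harg|]; subst.
  - inversion Hbase.
  - inversion Hfun as [? ? Hbase| | |? ? ? Hbody]; subst.
    + inversion Hbase as [? w' ? Hw' Hw Hw'b]; subst. unfold BV in *.
      eexists _, _, D. split; [reflexivity|]. split; [|reflexivity].
      intros r s. rewrite nameless_graft by (intros y Hy [E|[]]; subst; contradiction).
      apply nameless_eq_FV. intros y Hy. simpl. unfold env_upd.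
      case_eqb; subst; try reflexivity; try congruence.
      exfalso. apply Hw'. right. exact Hy.
    + eexists _, _, D. split; [reflexivity|]. split; [|reflexivity].
      intros r s. apply (alpha'_star_nameless_equiv _ _ (rt_step _ _ _ _ Hbody)).
  - eexists _, _, _. split; [reflexivity|]. split; [reflexivity|].
    apply (alpha'_star_nameless_equiv _ _ (rt_step _ _ _ _ Harg)).
Qed.

Lemma alpha'_star_redex v A B T : alpha'_star (App (Lam v A) B) T ->
  exists w C D, T = App (Lam w C) D /\ redex_equiv v A B w C D.
Proof.
  intro H. apply clos_rt_rtn1 in H. induction H as [|T U HTU _ IH].
  - exists v, A, B. split; [reflexivity|]. split; reflexivity.
  - destruct IH as (w & C & D & -> & HC & HD).
    destruct (alpha'_redex _ _ _ _ HTU) as (w' & C' & D' & -> & HC' & HD').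
    exists w', C', D'. split; [reflexivity|]. split; congruence.
Qed.

Lemma clean_redex_capture_free w C D : clean (App (Lam w C) D) ->
  forall y, In y (binders C) -> ~ In y (FV D).
Proof.
  intros [Hclean _] y Hy HyD. apply (Hclean y).
  - right. apply in_or_app. left. exact Hy.
  - apply in_or_app. right. exact HyD.
Qed.

Lemma alpha'_alpha : inclusion term alpha' alpha.
Proof.
  apply compat_least; [apply compatible_compat|].
  intros T U [v v' A Hv' Hv Hv'b]. apply c_base.
  rewrite <- rep_graft by (intros z Hz [E|[]]; subst; contradiction).
  constructor. intro E. apply Hv'. right. exact E.
Qed.

Lemma beta''_base_beta'_star T U : beta''_base T U -> beta'_star T U.
Proof.
  intros [v A B v' A' B' Hpath Hclean].
  apply rt_trans with (App (Lam v' A') B').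
  - apply (clos_rt_mono alpha'); [|exact Hpath]. intros ? ? H. right. apply alpha'_alpha, H.
  - apply rt_step. left. apply c_base.
    rewrite <- rep_graft by (exact (clean_redex_capture_free _ _ _ Hclean)).
    constructor.
Qed.

Lemma beta'_base_beta''_star T U : beta'_base T U -> beta''_star T U.
Proof.
  intros [v A B].
  destruct (alpha'_star_fresh_binders (App (Lam v A) B) (FV (App (Lam v A) B)))
    as (T' & HT' & Hnd & Havoid).
  destruct (alpha'_star_redex _ _ _ _ HT') as (w & C & D & -> & HC & HD).
  assert (Hclean : clean (App (Lam w C) D)).
  { split; [|exact Hnd]. intros y Hy Hy'.
    apply (Havoid y Hy), (proj2 (alpha'_star_nameless_equiv _ _ HT')), Hy'. }
  apply rt_trans with (graft C w D).
  - apply rt_step. left. apply c_base. econstructor; eassumption.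
  - apply (clos_rt_mono alpha'); [intros ? ? H; right; exact H|].
    apply (alpha'_star_of_nameless (nameless LFree (rep A v B)) LFree); [| | |reflexivity].
    + intro y. left. exists y. reflexivity.
    + intros a b E. injection E as E. exact E.
    + unfold rep. rewrite nameless_repf, nameless_graft by
        (reflexivity || exact (clean_redex_capture_free _ _ _ Hclean)).
      rewrite HC, HD. reflexivity.
Qed.

Theorem lemma5p8 :
  (forall A B : term, beta'' A B -> beta'_star A B) /\
  (forall A B : term, beta' A B -> beta''_star A B).
Proof.
  split; apply compat_least.
  - apply compatible_clos_rt, compatible_union; apply compatible_compat.
  - exact beta''_base_beta'_star.
  - apply compatible_clos_rt, compatible_union; apply compatible_compat.
  - exact beta'_base_beta''_star.
Qed.
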